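(* Let $A$ be a finite set of agents and $(M_U)_{U\subseteq A}$ a dynamic network model on $A$, with associated full-information protocol complex functor $F:\Gamma\to\Gamma^{\mathrm{op}}\mathbf{Set}$ and its left Yoneda extension $F_!:\Gamma^{\mathrm{op}}\mathbf{Set}\to\Gamma^{\mathrm{op}}\mathbf{Set}$. Then there is a morphism of csets $\pi_X:F_!(X)\to X$ for every cset $X$, natural in $X$; in particular every cset $X$ carries an $F_!$-algebra structure $\pi_X:F_!(X)\to X$. (On a standard simplex, $\pi_{\Gamma[U]}:F(U)\to\Gamma[U]$ sends every $V$-simplex of $F(U)$ to the unique $V$-simplex of $\Gamma[U]$.)
   Context: $\Gamma$ is the poset category of subsets of $A$ ordered by inclusion, with unique morphism $\delta_{U,V}:U\to V$ when $U\subseteq V$. A cset (chromatic augmented semi-simplicial set) is a functor $X:\Gamma^{\mathrm{op}}\to\mathbf{Set}$; elements of $X(U)$ are called $U$-simplices and $\partial_{U,V}=X(\delta_{U,V}):X(V)\to X(U)$ are the face maps; morphisms of csets are natural transformations. $\Gamma[U]=\Gamma(-,U)$ is the representable cset: $\Gamma[U](T)$ is a singleton if $T\subseteq U$ and empty otherwise. For a functor $G:\Gamma\to\Gamma^{\mathrm{op}}\mathbf{Set}$, its left Yoneda extension $G_!$ is the (up to isomorphism unique) colimit-preserving functor $\Gamma^{\mathrm{op}}\mathbf{Set}\to\Gamma^{\mathrm{op}}\mathbf{Set}$ with $G_!(\Gamma[U])=G(U)$ naturally in $U$; explicitly $G_!(X)=\mathrm{colim}_{(U,x\in X(U))}G(U)$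 over the category of elements of $X$. A communication graph on a set $U$ is a directed graph $G\subseteq U\times U$; agent $a$ is active in $G$ if $(a,a)\in G$, and the view of an active agent $a$ is $\mathrm{view}_G(a)=\{b\mid (b,a)\in G\}$; $\mathrm{Active}(G)$ is the set of active agents. A dynamic network model is a family $(M_U)_{U\subseteq A}$ where each $M_U$ is a set of communication graphs on $U$. The full-information protocol complex functor $F$ is: $F(U)(V)=\emptyset$ if $V\not\subseteq U$; otherwise $F(U)(V)=\{\{(v,\mathrm{view}_G(v))\mid v\in V\}\mid G\in M_{U'}\text{ for some }U'\subseteq U,\ V\subseteq \mathrm{Active}(G)\}$; face maps $F(U)(\delta_{V,W})$ send $\{(w,\mathrm{view}_G(w))\mid w\in W\}$ to $\{(v,\mathrm{view}_G(v))\mid v\in V\}$; and for $U\subseteq T$, $F(\delta_{U,T}):F(U)\to F(T)$ is the evident inclusion $\{(v,\mathrm{view}_G(v))\}_{v\in V}\mapsto\{(v,\mathrm{view}_G(v))\}_{v\in V}$. *)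

From HB Require Import structures.
From mathcomp Require Import all_boot.
From Stdlib Require Import Relations FunctionalExtensionality
  PropExtensionality ProofIrrelevance.

Set Implicit Arguments.
Unset Strict Implicit.
Unset Printing Implicit Defensive.

Section Csets.
Variable A : finType.

(* Gamma = poset of subsets of A ({set A}); the unique morphism U -> V is a
   (proof-irrelevant, boolean) proof of U \subset V.
   A cset is a functor Gamma^op -> Set (Type-valued here). *)
Record cset := CSet {
  cs_obj :> {set A} -> Type;
  cs_face : forall U V : {set A}, U \subset V -> cs_obj V -> cs_obj U;
  cs_face_id : forall (U : {set A}) (h : U \subset U) x, cs_face h x = x;
  cs_face_comp : forall (U V W : {set A}) (h1 : U \subset V) (h2 : V \subset W)
      (h3 : U \subset W) x, cs_face h1 (cs_face h2 x) = cs_face h3 x }.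

Record hom (X Y : cset) := Hom {
  hom_fun :> forall U, X U -> Y U;
  hom_nat : forall (U V : {set A}) (h : U \subset V) (x : X V),
      hom_fun (cs_face h x) = cs_face h (hom_fun x) }.

Record cfunctor := CFun {
  cf_obj :> {set A} -> cset;
  cf_map : forall U T : {set A}, U \subset T -> hom (cf_obj U) (cf_obj T);
  cf_map_id : forall (U : {set A}) (h : U \subset U) V x, cf_map h V x = x;
  cf_map_comp : forall (U T S : {set A}) (h1 : U \subset T) (h2 : T \subset S)
      (h3 : U \subset S) V x, cf_map h2 V (cf_map h1 V x) = cf_map h3 V x }.

Section Lan.
Variable G : cfunctor.

Section Obj.
Variable X : cset.

(* pre-elements of colim_{(U, x in X U)} G(U)(V) *)
Definition pre (V : {set A}) := {U : {set A} & (X U * G U V)%type}.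

Definition step V : relation (pre V) := fun p q =>
  exists (U T : {set A}) (h : U \subset T) (x : X T) (s : G U V),
    p = existT _ U (cs_face h x, s) /\ q = existT _ T (x, cf_map G h V s).

Definition Req V := clos_refl_sym_trans (pre V) (@step V).

Definition Lobj (V : {set A}) :=
  {P : pre V -> Prop | exists p, forall q, P q <-> Req p q}.

Definition preface (V W : {set A}) (h : V \subset W) (p : pre W) : pre V :=
  let: existT U (x, s) := p in existT _ U (x, cs_face h s).

Lemma Req_face (V W : {set A}) (h : V \subset W) p q :
  Req p q -> Req (preface h p) (preface h q).
Proof.
elim=> [{}p {}q [U [T [h' [x [s [-> ->]]]]]]| {}p | {}p {}q _ IH | p1 p2 p3 _ IH1 _ IH2].
- apply: rst_step; exists U, T, h', x, (cs_face h s); split=> //=.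
  by rewrite hom_nat.
- exact: rst_refl.
- exact: rst_sym.
- exact: rst_trans IH2.
Qed.

Lemma Lface_proof (V W : {set A}) (h : V \subset W) (z : Lobj W) :
  exists p, forall q,
    (exists p', proj1_sig z p' /\ Req (preface h p') q) <-> Req p q.
Proof.
case: z => P [p0 Hp0] /=; exists (preface h p0) => q; split.
- case=> p' [/Hp0 H1 H2]; apply: rst_trans H2; exact: Req_face.
- by move=> H; exists p0; split=> //; apply/Hp0; apply: rst_refl.
Qed.

Definition Lface (V W : {set A}) (h : V \subset W) (z : Lobj W) : Lobj V :=
  exist _ (fun q => exists p', proj1_sig z p' /\ Req (preface h p') q)
    (Lface_proof h z).

Lemma Lobj_eq (V : {set A}) (z z' : Lobj V) :
  (forall q, proj1_sig z q <-> proj1_sig z' q) -> z = z'.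
Proof.
case: z => P HP; case: z' => P' HP' /= H.
have E : P = P'.
  by apply: functional_extensionality => q; apply: propositional_extensionality.
subst P'; f_equal; exact: proof_irrelevance.
Qed.

Lemma class_closed (V : {set A}) (z : Lobj V) p q :
  proj1_sig z p -> Req p q -> proj1_sig z q.
Proof.
case: z => P [p0 H] /= Hp Hpq; apply/H; apply/rst_trans/Hpq; exact/H.
Qed.

Lemma preface_id (V : {set A}) (h : V \subset V) p : preface h p = p.
Proof. by case: p => U [x s] /=; rewrite cs_face_id. Qed.

Lemma preface_comp (U V W : {set A}) (h1 : U \subset V) (h2 : V \subset W)
   (h3 : U \subset W) p : preface h1 (preface h2 p) = preface h3 p.
Proof. by case: p => T [x s] /=; rewrite cs_face_comp. Qed.

Lemma Lface_id (V : {set A}) (h : V \subset V) z : Lface h z = z.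
Proof.
apply: Lobj_eq => q /=; split.
- by case=> p [Hp]; rewrite preface_id; apply: class_closed.
- by move=> Hq; exists q; rewrite preface_id; split=> //; apply: rst_refl.
Qed.

Lemma Lface_comp (U V W : {set A}) (h1 : U \subset V) (h2 : V \subset W)
   (h3 : U \subset W) z : Lface h1 (Lface h2 z) = Lface h3 z.
Proof.
apply: Lobj_eq => q /=; split.
- case=> p2 [[p1 [Hp1 H12]] H2q]; exists p1; split=> //.
  rewrite -(preface_comp h1 h2); apply: rst_trans H2q; exact: Req_face.
- case=> p [Hp Hq]; exists (preface h2 p); split.
    by exists p; split=> //; apply: rst_refl.
  by rewrite preface_comp.
Qed.

Definition Lan : cset := CSet Lface_id Lface_comp.

End Obj.

Section Map.
Variables (X Y : cset) (g : hom X Y).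

Definition premap (V : {set A}) (p : pre X V) : pre Y V :=
  let: existT U (x, s) := p in existT _ U (g U x, s).

Lemma Req_map (V : {set A}) (p q : pre X V) : Req p q -> Req (premap p) (premap q).
Proof.
elim=> [{}p {}q [U [T [h' [x [s [-> ->]]]]]]| {}p | {}p {}q _ IH | p1 p2 p3 _ IH1 _ IH2].
- apply: rst_step; exists U, T, h', (g T x), s; split=> //=.
  by rewrite hom_nat.
- exact: rst_refl.
- exact: rst_sym.
- exact: rst_trans IH2.
Qed.

Lemma Lmap_proof (V : {set A}) (z : Lobj X V) :
  exists p, forall q,
    (exists p', proj1_sig z p' /\ Req (premap p') q) <-> Req p q.
Proof.
case: z => P [p0 Hp0] /=; exists (premap p0) => q; split.
- case=> p' [/Hp0 H1 H2]; apply: rst_trans H2; exact: Req_map.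
- by move=> H; exists p0; split=> //; apply/Hp0; apply: rst_refl.
Qed.

Definition Lmap (V : {set A}) (z : Lobj X V) : Lobj Y V :=
  exist _ (fun q => exists p', proj1_sig z p' /\ Req (premap p') q)
    (Lmap_proof z).

Lemma Lmap_nat (U V : {set A}) (h : U \subset V) (z : Lobj X V) :
  Lmap (Lface h z) = Lface h (Lmap z).
Proof.
apply: Lobj_eq => q /=; split.
- case=> p2 [[p1 [Hp1 H12]] H2q]; exists (premap p1); split.
    by exists p1; split=> //; apply: rst_refl.
  apply: rst_trans H2q; have -> : preface h (premap p1) = premap (preface h p1).
    by case: p1 {Hp1 H12} => T [x s].
  exact: Req_map.
- case=> p2 [[p1 [Hp1 H12]] H2q]; exists (preface h p1); split.
    by exists p1; split=> //; apply: rst_refl.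
  apply: rst_trans H2q; have -> : premap (preface h p1) = preface h (premap p1).
    by case: p1 {Hp1 H12} => T [x s].
  exact: Req_face.
Qed.

Definition Lhom : hom (Lan X) (Lan Y) := @Hom (Lan X) (Lan Y) Lmap Lmap_nat.

End Map.
End Lan.

Definition active (G : {set A * A}) : {set A} := [set a | (a, a) \in G].
Definition view (G : {set A * A}) (a : A) : {set A} := [set b | (b, a) \in G].

Definition views (G : {set A * A}) (V : {set A}) : {set A * {set A}} :=
  [set (v, view G v) | v in V].

Definition restrict (V : {set A}) (f : {set A * {set A}}) : {set A * {set A}} :=
  [set p in f | p.1 \in V].

Section F.
Variable M : {set A} -> {set {set A * A}}.

(* f is a V-simplex of F(U) *)
Definition inF (U V : {set A}) (f : {set A * {set A}}) : bool :=
  (V \subset U) &&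
  [exists U' : {set A}, exists G : {set A * A},
     [&& U' \subset U, G \in M U', V \subset active G & f == views G V]].

Definition Fsimp (U V : {set A}) := {f : {set A * {set A}} | inF U V f}.

Lemma restrict_views (G : {set A * A}) (V W : {set A}) : V \subset W ->
  restrict V (views G W) = views G V.
Proof.
move=> sVW; apply/setP => p; rewrite !inE.
apply/andP/imsetP.
- by case=> /imsetP [v vW ->] /= vV; exists v.
- case=> v vV ->; split=> //; apply/imsetP; exists v => //; exact: (subsetP sVW).
Qed.

Lemma inF_restrict (U V W : {set A}) f : V \subset W -> inF U W f -> inF U V (restrict V f).
Proof.
move=> sVW /andP [sWU /existsP [U' /existsP [G /and4P [sU'U GM sWa /eqP ->]]]].
apply/andP; split; first exact: subset_trans sWU.
apply/existsP; exists U'; apply/existsP; exists G.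
by rewrite sU'U GM (subset_trans sVW sWa) (restrict_views _ sVW) eqxx.
Qed.

Lemma inF_mono (U T V : {set A}) f : U \subset T -> inF U V f -> inF T V f.
Proof.
move=> sUT /andP [sVU /existsP [U' /existsP [G /and4P [sU'U GM sVa Ef]]]].
apply/andP; split; first exact: subset_trans sUT.
apply/existsP; exists U'; apply/existsP; exists G.
by rewrite (subset_trans sU'U sUT) GM sVa Ef.
Qed.

Definition Fface (U V W : {set A}) (h : V \subset W) (s : Fsimp U W) : Fsimp U V :=
  exist _ (restrict V (val s)) (inF_restrict h (valP s)).

Lemma Fface_id (U V : {set A}) (h : V \subset V) s : Fface h s = s :> Fsimp U V.
Proof.
apply: val_inj => /=; case: s => f /= /andP [_ /existsP [U' /existsP [G /and4P [_ _ _ /eqP ->]]]].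
exact: restrict_views.
Qed.

Lemma Fface_comp (U V W Z : {set A}) (h1 : V \subset W) (h2 : W \subset Z) (h3 : V \subset Z) s :
  Fface h1 (Fface h2 s) = Fface h3 s :> Fsimp U V.
Proof.
apply: val_inj => /=; apply/setP => p; rewrite !inE.
case: (p.1 \in V) (subsetP h1 p.1) => [->|] //; by rewrite ?andbT ?andbF.
Qed.

Definition Fobj (U : {set A}) : cset := CSet (@Fface_id U) (@Fface_comp U).

Definition Fincl (U T : {set A}) (h : U \subset T) (V : {set A}) (s : Fsimp U V) : Fsimp T V :=
  exist _ (val s) (inF_mono h (valP s)).

Lemma Fincl_nat (U T : {set A}) (h : U \subset T) (V W : {set A}) (h' : V \subset W) (s : Fsimp U W) :
  Fincl h (Fface h' s) = Fface h' (Fincl h s).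
Proof. exact: val_inj. Qed.

Definition Fmap (U T : {set A}) (h : U \subset T) : hom (Fobj U) (Fobj T) :=
  @Hom (Fobj U) (Fobj T) (Fincl h) (Fincl_nat h).

Lemma Fmap_id (U : {set A}) (h : U \subset U) V x : Fmap h V x = x.
Proof. exact: val_inj. Qed.

Lemma Fmap_comp (U T S : {set A}) (h1 : U \subset T) (h2 : T \subset S) (h3 : U \subset S) V x :
  Fmap h2 V (Fmap h1 V x) = Fmap h3 V x.
Proof. exact: val_inj. Qed.

Definition Fpc : cfunctor := CFun Fmap_id Fmap_comp.

End F.
End Csets.

From mathcomp Require Import all_boot.
From Stdlib Require Import Relations ClassicalEpsilon.

Set Implicit Arguments.
Unset Strict Implicit.

(* Every V-simplex of G(U) lies over some V ⊆ U, so an element ((U, x), s) of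
   the colimit G_!(X)(V) can be sent to the face of x at V.  The relation
   generating the colimit only moves along faces of x, so this is well defined,
   and it commutes with faces and with morphisms of csets because both act on
   the x-component alone. *)

Section ClassRepresentatives.
Variables (A : finType) (G : cfunctor A) (X : cset A).

Lemma Lobj_rep (V : {set A}) (z : Lobj G X V) : exists p, proj1_sig z p.
Proof. by case: z => P [p Hp]; exists p; apply/Hp/rst_refl. Qed.

Lemma Lface_rep (V W : {set A}) (h : V \subset W) (z : Lobj G X W) p :
  proj1_sig z p -> proj1_sig (Lface h z) (preface h p).
Proof. by move=> zp; exists p; split=> //; apply: rst_refl. Qed.

Lemma Lmap_rep (Y : cset A) (g : hom X Y) (V : {set A}) (z : Lobj G X V) p :
  proj1_sig z p -> proj1_sig (Lmap g z) (premap g p).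
Proof. by move=> zp; exists p; split=> //; apply: rst_refl. Qed.

End ClassRepresentatives.

Lemma cs_face_irrelevance (A : finType) (X : cset A) (U V : {set A})
    (h1 h2 : U \subset V) (x : X V) :
  cs_face h1 x = cs_face h2 x.
Proof. by rewrite (bool_irrelevance h1 h2). Qed.

Section Collapse.
Variables (A : finType) (G : cfunctor A).
Hypothesis G_sub : forall (U V : {set A}), G U V -> V \subset U.

Section Obj.
Variable X : cset A.

Definition pre_collapse (V : {set A}) (p : pre G X V) : X V :=
  let: existT U (x, s) := p in cs_face (G_sub s) x.

Lemma pre_collapse_Req (V : {set A}) (p q : pre G X V) :
  Req p q -> pre_collapse p = pre_collapse q.
Proof.
elim=> [{}p {}q [U [T [h [x [s [-> ->]]]]]] | // | // | p1 p2 p3 _ -> //].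
rewrite /= (cs_face_comp _ _ (subset_trans (G_sub s) h)).
exact: cs_face_irrelevance.
Qed.

Definition collapse (V : {set A}) (z : Lan G X V) : X V :=
  pre_collapse (proj1_sig (constructive_indefinite_description _ (proj2_sig z))).

Lemma collapseE (V : {set A}) (z : Lan G X V) p :
  proj1_sig z p -> collapse z = pre_collapse p.
Proof.
move=> zp; rewrite /collapse.
case: constructive_indefinite_description => p0 Hp0 /=.
exact/pre_collapse_Req/Hp0.
Qed.

Lemma collapse_face (U V : {set A}) (h : U \subset V) (z : Lan G X V) :
  collapse (cs_face h z) = cs_face h (collapse z).
Proof.
have [p zp] := Lobj_rep z.
rewrite (collapseE zp) (collapseE (Lface_rep h zp)).
case: p {zp} => T [x s] /=.
rewrite (cs_face_comp _ _ (subset_trans h (G_sub s))).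
exact: cs_face_irrelevance.
Qed.

Definition collapse_hom : hom (Lan G X) X := Hom collapse_face.

End Obj.

Lemma collapse_natural (X Y : cset A) (g : hom X Y) (V : {set A})
    (z : Lan G X V) :
  g V (collapse_hom X V z) = collapse_hom Y V (Lhom G g V z).
Proof.
have [p zp] := Lobj_rep z.
rewrite /= (collapseE zp) (collapseE (Lmap_rep g zp)).
by case: p {zp} => T [x s] /=; rewrite hom_nat.
Qed.

End Collapse.

Lemma Fsimp_sub (A : finType) (M : {set A} -> {set {set A * A}})
    (U V : {set A}) (s : Fsimp M U V) :
  V \subset U.
Proof. by case: s => f /andP []. Qed.

Theorem proposition1 (A : finType) (M : {set A} -> {set {set A * A}})
  (HM : forall (U : {set A}) (G : {set A * A}), G \in M U -> G \subset setX U U) :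
  exists pi : forall X : cset A, hom (Lan (Fpc M) X) X,
    forall (X Y : cset A) (g : hom X Y) (V : {set A}) (z : Lan (Fpc M) X V),
      g V (pi X V z) = pi Y V (Lhom (Fpc M) g V z).
Proof.
exists (@collapse_hom A (Fpc M) (@Fsimp_sub A M)).
exact: collapse_natural.
Qed.
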